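(* Let $l\in\mathbb{N}$ and, for $\alpha\in\mathcal{E}$, put $\Phi(\alpha)=\omega^3\cdot\alpha+\omega^3+l+2$. Let $E(x)=2^{2^{2^x}}$. Suppose $X=\{x_0<\dots<x_{|X|-1}\}$ is a finite set of natural numbers, all greater than $2$, which is $\Phi(\gamma_0)$-large. Suppose $\gamma_0>\gamma_1>\dots>\gamma_j$ are in $\mathcal{E}$ and $\mathrm{MC}(\gamma_i)\leq E(x_i+l)$ holds for every $i\leq j$ for which $x_i$ is defined (i.e. $i\leq|X|-1$). Then $j\leq|X|-1$.
   Context: $\mathcal{E}$ is the set of ordinal notations below $\varepsilon_0$: formal sums $\omega^{\alpha_0}+\dots+\omega^{\alpha_n}$ with $\alpha_0\geq\dots\geq\alpha_n\in\mathcal{E}$ (the empty sum is $0$). The order is lexicographic: $\omega^{\alpha_0}+\dots+\omega^{\alpha_n}<\omega^{\beta_0}+\dots+\omega^{\beta_m}$ iff either $n<m$ and $\alpha_i=\beta_i$ for all $i\leq n$, or there is $i\leq\min\{n,m\}$ with $\alpha_j=\beta_j$ for $j<i$ and $\alpha_i<\beta_i$. Here $1=\omega^0$, $k=1+\dots+1$, $\omega=\omega^1$; $+$ and $\cdot$ are the usual ordinal addition and multiplication on notations. Every $\alpha$ has a Cantor normal form $\omega^{\alpha_0}a_0+\dots+\omega^{\alpha_n}a_n$ with $\alpha_0>\dots>\alpha_n$ and positive integers $a_i$. The maximal coefficient is $\mathrm{MC}(0)=0$ and $\mathrm{MC}(\alpha)=\max_i\{a_i,\mathrm{MC}(\alpha_i)\}$.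 Fundamental sequences, for $\alpha=\omega^{\alpha_0}+\dots+\omega^{\alpha_n}$ and $x\in\mathbb{N}$: $0[x]=0$. If $\alpha_n=0$ then $\alpha[x]=\omega^{\alpha_0}+\dots+\omega^{\alpha_{n-1}}$. If $\alpha_n=\beta+1$ then $\alpha[x]=\omega^{\alpha_0}+\dots+\omega^{\alpha_{n-1}}+\omega^\beta\cdot x$. If $\alpha_n$ is a nonzero non-successor then $\alpha[x]=\omega^{\alpha_0}+\dots+\omega^{\alpha_{n-1}}+\omega^{\alpha_n[x]}$. A finite set $X=\{x_0<\dots<x_{|X|-1}\}$ is $\alpha$-large if $\alpha[x_0][x_1]\cdots[x_{|X|-1}]=0$. *)

From HB Require Import structures.
From mathcomp Require Import all_boot.
Set Implicit Arguments. Unset Strict Implicit. Unset Printing Implicit Defensive.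

(* Ordinal notations below epsilon_0: [ocons a b] denotes omega^a + b. *)
Inductive ord : Type := ozero | ocons (a b : ord).

Fixpoint ocmp (x y : ord) : comparison :=
  match x, y with
  | ozero, ozero => Eq
  | ozero, ocons _ _ => Lt
  | ocons _ _, ozero => Gt
  | ocons a b, ocons c d =>
      match ocmp a c with Eq => ocmp b d | r => r end
  end.

Definition olt (x y : ord) : bool := if ocmp x y is Lt then true else false.
Definition oeq (x y : ord) : bool := if ocmp x y is Eq then true else false.

(* Membership in E: exponents weakly decreasing, recursively. *)
Fixpoint is_nf (x : ord) : bool :=
  match x with
  | ozero => true
  | ocons a b =>
      is_nf a && is_nf b &&
      (match b with ozero => true | ocons c _ => ~~ olt a c end)
  end.

Fixpoint oadd (x y : ord) : ord :=
  match x with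
  | ozero => y
  | ocons a b =>
      match y with
      | ozero => x
      | ocons c _ => if olt a c then y else ocons a (oadd b y)
      end
  end.

(* x * omega^b *)
Definition omul_w (x b : ord) : ord :=
  match x with
  | ozero => ozero
  | ocons a _ => match b with ozero => x | _ => ocons (oadd a b) ozero end
  end.

Fixpoint omul (x y : ord) : ord :=
  match y with
  | ozero => ozero
  | ocons b d => oadd (omul_w x b) (omul x d)
  end.

Fixpoint onat (k : nat) : ord :=
  match k with 0 => ozero | k'.+1 => ocons ozero (onat k') end.

Definition oomega : ord := ocons (onat 1) ozero.
Definition oomega3 : ord := ocons (onat 3) ozero.

Fixpoint ord_eqb (x y : ord) : bool :=
  match x, y with
  | ozero, ozero => true
  | ocons a b, ocons c d => ord_eqb a c && ord_eqb b d
  | _, _ => false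
  end.
Lemma ord_eqbP : Equality.axiom ord_eqb.
Proof.
elim=> [|a IHa b IHb] [|c d] /=; try by constructor.
by case: IHa => [->|H]; [case: IHb => [->|H]|]; constructor; congruence.
Qed.
HB.instance Definition _ := hasDecEq.Build ord ord_eqbP.

(* Maximal coefficient: the coefficient of the leading exponent a of
   omega^a + b is 1 + the number of leading summands of b with exponent a. *)
Fixpoint lead_count (a b : ord) : nat :=
  match b with
  | ozero => 0
  | ocons c d => if oeq a c then (lead_count a d).+1 else 0
  end.

Fixpoint MC (x : ord) : nat :=
  match x with
  | ozero => 0
  | ocons a b => maxn (lead_count a b).+1 (maxn (MC a) (MC b))
  end.

Fixpoint omega_times (b : ord) (x : nat) : ord :=
  match x with 0 => ozero | n.+1 => ocons b (omega_times b n) end.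

(* last exponent is 0, i.e. the ordinal is a successor *)
Fixpoint last_is_zero (a : ord) : bool :=
  match a with
  | ozero => false
  | ocons e b =>
      match b with
      | ozero => if e is ozero then true else false
      | _ => last_is_zero b
      end
  end.

Fixpoint drop_last (a : ord) : ord :=
  match a with
  | ozero => ozero
  | ocons e b => match b with ozero => ozero | _ => ocons e (drop_last b) end
  end.

Fixpoint fs (alpha : ord) (x : nat) : ord :=
  match alpha with
  | ozero => ozero
  | ocons a b =>
      match b with
      | ozero =>
          match a with
          | ozero => ozero
          | _ => if last_is_zero a then omega_times (drop_last a) x
                 else ocons (fs a x) ozero
          end
      | _ => ocons a (fs b x)
      end
  end.

(* X (listed increasingly) is alpha-large iff alpha[x_0]...[x_{|X|-1}] = 0 *)
Definition large (alpha : ord) (X : seq nat) : bool :=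
  foldl fs alpha X == ozero.

Definition Phi (l : nat) (alpha : ord) : ord :=
  oadd (oadd (oadd (omul oomega3 alpha) oomega3) (onat l)) (onat 2).

Definition Etow (x : nat) : nat := 2 ^ (2 ^ (2 ^ x)).

From mathcomp Require Import all_boot zify.
Set Implicit Arguments. Unset Strict Implicit.

(* Along X, the descent from Phi g = omega^3 g + omega^3 + l + 2 first spends
   l + 2 steps on the finite part; the next element z turns omega^3 into
   omega^2 + omega^2 (z - 1), and erasing omega^2 (z - 1) forces the elements
   to climb to a tower of 2's of height about z.  As z exceeds by more than l
   the element of X that bounds MC g' for the next g' < g, the tower exceeds
   MC (Phi g'); since also Phi g' < omega^3 g + omega^2, the Bachmann property
   makes the descent pass exactly through Phi g'.  Hence it visits
   Phi (gamma 0), ..., Phi (gamma j), none of which is 0, at strictly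
   increasing positions of X. *)

Lemma ocmp_refl x : ocmp x x = Eq.
Proof. by elim: x => //= a -> b ->. Qed.

Lemma ocmp_eq x y : ocmp x y = Eq -> x = y.
Proof.
elim: x y => [|a IHa b IHb] [|c d] //=.
by case E: (ocmp a c) => // /IHb ->; rewrite (IHa _ E).
Qed.

Lemma ocmp_sym x y : ocmp y x = CompOpp (ocmp x y).
Proof.
by elim: x y => [|a IHa b IHb] [|c d] //=; rewrite IHa IHb; case: (ocmp a c).
Qed.

Lemma oeqE x y : oeq x y = (x == y).
Proof.
rewrite /oeq; case: eqP => [->|neq_xy]; first by rewrite ocmp_refl.
by case E: ocmp => //; case: neq_xy; apply: ocmp_eq.
Qed.

Definition ole x y := (x == y) || olt x y.

Lemma ole0x x : ole ozero x.
Proof. by case: x. Qed.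

Lemma oltx0 x : olt x ozero = false.
Proof. by case: x. Qed.

Lemma nolt_ole x y : ~~ olt x y -> ole y x.
Proof.
rewrite /ole /olt (ocmp_sym y x); case E: ocmp => //= _.
  by rewrite (ocmp_eq E) eqxx.
by rewrite orbT.
Qed.

Lemma olt_ocons_exp c d a b : olt c a -> olt (ocons c d) (ocons a b).
Proof. by rewrite /olt /=; case: ocmp. Qed.

Lemma olt_ocons_omega_pow c d a : olt (ocons c d) (ocons a ozero) = olt c a.
Proof. by rewrite /olt /=; case: ocmp => //; case: d. Qed.

Lemma ole_ocons2l a d b : ole d b -> ole (ocons a d) (ocons a b).
Proof.
by rewrite /ole /olt /= ocmp_refl => /orP[/eqP ->|->]; rewrite ?eqxx ?orbT.
Qed.

(* Concatenation of the summand lists: this is ordinal addition only when no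
   summand of p is absorbed, see [oadd_ocat]. *)
Fixpoint ocat (p t : ord) : ord :=
  match p with ozero => t | ocons a b => ocons a (ocat b t) end.

Lemma ocatx0 p : ocat p ozero = p.
Proof. by elim: p => //= a _ b ->. Qed.

Lemma ocatA p q r : ocat (ocat p q) r = ocat p (ocat q r).
Proof. by elim: p => //= a _ b ->. Qed.

Lemma ocat_neq0l p t : p <> ozero -> ocat p t <> ozero.
Proof. by case: p. Qed.

Lemma ocat_neq0r p t : t <> ozero -> ocat p t <> ozero.
Proof. by case: p. Qed.

Lemma ocmp_ocat2l p x y : ocmp (ocat p x) (ocat p y) = ocmp x y.
Proof. by elim: p => //= a _ b ->; rewrite ocmp_refl. Qed.

Lemma ocat_onat m n : ocat (onat m) (onat n) = onat (m + n).
Proof. by elim: m => //= m ->. Qed.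

Lemma fs_ocat p t x : t <> ozero -> fs (ocat p t) x = ocat p (fs t x).
Proof.
move=> t_neq0; elim: p => //= a _ b IH.
case E: (ocat b t) => [|c d]; last by rewrite -E IH.
by have := @ocat_neq0r b _ t_neq0.
Qed.

Lemma fs_ocat_onatS p n y : fs (ocat p (onat n.+1)) y = ocat p (onat n).
Proof. by rewrite -addn1 -ocat_onat -ocatA fs_ocat // ocatx0. Qed.

Lemma last_is_zeroE a : last_is_zero a -> a = ocat (drop_last a) (onat 1).
Proof.
elim: a => //= e _ [|c d] IH; first by case: e.
by move=> /IH {1}->.
Qed.

Lemma olt_ocat1 c p : olt c (ocat p (onat 1)) -> ole c p.
Proof.
rewrite /ole /olt; elim: p c => [|a _ b IH] [|e r] //=.
- by case: e => [|? ?] //=; case: r.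
- case E: (ocmp e a) => //.
  move=> /(IH r); rewrite (ocmp_eq E).
  by case/orP => [/eqP ->|->]; rewrite ?eqxx ?orbT.
- by rewrite orbT.
Qed.

Lemma omega_times_ozero n : omega_times ozero n = onat n.
Proof. by elim: n => //= n ->. Qed.

Lemma lead_count_leMC a e : lead_count a e <= MC e.
Proof. by case: e => //= c d; case: ifP => // /[!oeqE] /eqP <-; lia. Qed.

Lemma MC_omega_times p x : x <= MC (omega_times p x).
Proof.
case: x => [//|x] /=.
suff -> : lead_count p (omega_times p x) = x by lia.
by elim: x => //= x ->; rewrite oeqE eqxx.
Qed.

Lemma MC_fs_limit a x : a != ozero -> ~~ last_is_zero a -> x <= MC (fs a x).
Proof.
elim: a => [//|e IHe b IHb] _ /=.
case: b IHb => [|c d] IHb; last by move=> /(IHb isT) /=; lia.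
case: e IHe => [//|e1 e2] IHe _.
case: ifP => [_|/negbT /(IHe isT) /=]; [exact: MC_omega_times | lia].
Qed.

Lemma olt_omega_times c d n :
  is_nf (ocons c d) -> lead_count c d < n -> olt d (omega_times c n).
Proof.
elim: n d => [|n IH] [|e r] //= /andP[/andP[_ nf_er]].
move=> /nolt_ole /orP[/eqP ec|lt_ec]; last by rewrite olt_ocons_exp.
by subst e; rewrite oeqE eqxx ltnS => /(IH r nf_er); rewrite /olt /= ocmp_refl.
Qed.

Lemma olt_omega_times_ocons p c d x :
  is_nf (ocons c d) -> ole c p -> MC (ocons c d) < x ->
  olt (ocons c d) (omega_times p x).
Proof.
case: x => [|x] nf_cd; first by rewrite ltn0.
case/orP => [/eqP <-|lt_cp] MC_lt /=; last exact: olt_ocons_exp.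
rewrite /olt /= ocmp_refl; apply: olt_omega_times nf_cd _.
by move: MC_lt => /=; lia.
Qed.

Lemma fs_omega_pow a x : a != ozero ->
  fs (ocons a ozero) x =
  if last_is_zero a then omega_times (drop_last a) x else ocons (fs a x) ozero.
Proof. by case: a. Qed.

(* The Bachmann property of the fundamental sequences. *)
Lemma ole_fs al be x : is_nf be -> olt be al -> MC be < x -> ole be (fs al x).
Proof.
elim: al be => [|a IHa b IHb] [|c d] nf_cd //; rewrite ?oltx0 ?ole0x //.
case: b IHb => [|b1 b2] IHb; last first.
  rewrite /olt /=; case E: (ocmp c a) => // lt_db MC_lt;
    last by rewrite /ole /olt /= E orbT.
  rewrite (ocmp_eq E); apply/ole_ocons2l/IHb => //.
  - by case/andP: nf_cd => /andP[].
  - by move: MC_lt => /=; lia.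
rewrite olt_ocons_omega_pow => lt_ca MC_lt.
have a_neq0 : a != ozero by case: a {IHa} lt_ca; rewrite ?oltx0.
rewrite fs_omega_pow //; case: ifP => [/last_is_zeroE Ea|/negbT lim_a].
  rewrite /ole orbC olt_omega_times_ocons //.
  by apply: olt_ocat1; rewrite -Ea.
have nf_c : is_nf c by case/andP: nf_cd => /andP[].
have MC_c : MC c < x by move: MC_lt => /=; lia.
case/orP: (IHa c nf_c lt_ca MC_c) => [/eqP c_eq|lt_c].
  by have := MC_fs_limit x a_neq0 lim_a; rewrite -c_eq; lia.
by rewrite /ole olt_ocons_exp ?orbT.
Qed.

Lemma foldl_take_drop (T R : Type) (f : R -> T -> R) z s m :
  foldl f z s = foldl f (foldl f z (take m s)) (drop m s).
Proof. by rewrite -foldl_cat cat_take_drop. Qed.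

Lemma foldl_take_addn (T R : Type) (f : R -> T -> R) z z1 z2 s m1 m2 :
  foldl f z (take m1 s) = z1 -> foldl f z1 (take m2 (drop m1 s)) = z2 ->
  foldl f z (take (m1 + m2) s) = z2.
Proof. by rewrite takeD foldl_cat => ->. Qed.

Lemma foldl_fs_size_gt0 a Y : foldl fs a Y = ozero -> a <> ozero -> 0 < size Y.
Proof. by case: Y => //= ->. Qed.

Lemma sorted_ltn_nth_gap s a k :
  sorted ltn s -> a + k < size s -> nth 0 s a + k <= nth 0 s (a + k).
Proof.
move=> s_sorted; elim: k => [|k IH] lt_aks; first by rewrite !addn0.
rewrite addnS in lt_aks *.
have lt_nth : nth 0 s (a + k) < nth 0 s (a + k).+1.
  by apply: (sorted_ltn_nth ltn_trans) => //; rewrite inE ltnW.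
by have := IH (ltnW lt_aks); lia.
Qed.

Lemma sorted_ltn_nth_mono s i j :
  sorted ltn s -> i <= j -> j < size s -> nth 0 s i <= nth 0 s j.
Proof.
move=> s_sorted le_ij lt_js.
by have := @sorted_ltn_nth_gap s i (j - i) s_sorted; rewrite subnKC //; lia.
Qed.

Lemma sorted_ltn_head_le s : sorted ltn s -> all (leq (nth 0 s 0)) s.
Proof.
case: s => //= a s /(order_path_min ltn_trans) a_lt; rewrite leqnn /=.
by apply/allP => y /(allP a_lt) /ltnW.
Qed.

Lemma foldl_fs_hits Y al be : is_nf be -> be <> ozero -> ole be al ->
  all (fun y => MC be < y) Y -> foldl fs al Y = ozero ->
  exists2 m, m < size Y & foldl fs al (take m Y) = be.
Proof.
move=> nf_be be_neq0; elim: Y al => [|y Y IH] al le_be_al /=.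
  by move=> _ al0; move: le_be_al; rewrite al0 /ole oltx0 orbF => /eqP.
case/orP: le_be_al => [/eqP <-|lt_be_al] /andP[MC_y MC_Y] Y0; first by exists 0.
have [m lt_m E] := IH _ (ole_fs nf_be lt_be_al MC_y) MC_Y Y0.
by exists m.+1.
Qed.

Definition erase_bound (t : ord) (B : nat -> nat) :=
  forall P Y y0, P <> ozero -> sorted ltn Y -> y0 <= nth 0 Y 0 ->
  foldl fs (ocat P t) Y = ozero ->
  exists m, [/\ m < size Y, foldl fs (ocat P t) (take m Y) = P
                            & B y0 <= nth 0 Y m].

Lemma erase_bound0 : erase_bound ozero id.
Proof.
move=> P Y y0 P_neq0 _ le_y0; rewrite ocatx0 => Y0.
by exists 0; rewrite take0; split=> //; apply: foldl_fs_size_gt0 Y0 P_neq0.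
Qed.

Lemma erase_bound_le t B B' :
  erase_bound t B -> (forall y, B' y <= B y) -> erase_bound t B'.
Proof.
move=> tB le_B'B P Y y0 P_neq0 sY le_y0 Y0.
have [m [lt_m E le_B]] := tB P Y y0 P_neq0 sY le_y0 Y0.
by exists m; split=> //; apply: leq_trans le_B.
Qed.

Lemma erase_bound_ocat t1 t2 B1 B2 :
  erase_bound t1 B1 -> erase_bound t2 B2 -> erase_bound (ocat t1 t2) (B1 \o B2).
Proof.
move=> t1B t2B P Y y0 P_neq0 sY le_y0; rewrite -ocatA => Y0.
have [m1 [lt_m1 E1 le_B2]] :=
  t2B (ocat P t1) Y y0 (@ocat_neq0l _ t1 P_neq0) sY le_y0 Y0.
have Y1_0 : foldl fs (ocat P t1) (drop m1 Y) = ozero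
  by rewrite -E1 -foldl_take_drop.
have le_B2' : B2 y0 <= nth 0 (drop m1 Y) 0 by rewrite nth_drop addn0.
have [m2 [lt_m2 E2 le_B1]] :=
  t1B P (drop m1 Y) (B2 y0) P_neq0 (drop_sorted _ sY) le_B2' Y1_0.
exists (m1 + m2); split; first by rewrite size_drop in lt_m2; lia.
- exact: foldl_take_addn E1 E2.
- by rewrite -nth_drop.
Qed.

(* The first element [y] of the sequence expands [omega^e] to [omega^e[y]];
   the rest of the sequence starts at [y.+1] or above. *)
Lemma erase_bound_omega_pow e B B' :
  (forall y, erase_bound (fs (ocons e ozero) y) (B' y)) ->
  (forall y0 y, y0 <= y -> B y0 <= B' y y.+1) -> erase_bound (ocons e ozero) B.
Proof.
move=> eB le_B P [|y Y] y0 P_neq0 sY le_y0 /=.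
  by move/(ocat_neq0l P_neq0).
rewrite fs_ocat // => Y0.
have sY' : sorted ltn Y by apply: path_sorted sY.
have Y_gt0 : 0 < size Y := foldl_fs_size_gt0 Y0 (ocat_neq0l P_neq0).
have le_yY : y.+1 <= nth 0 Y 0.
  by move: sY Y_gt0; case: (Y) => //= y1 Y' /andP[].
have [m [lt_m E le_B']] := eB y P Y y.+1 P_neq0 sY' le_yY Y0.
exists m.+1; split=> //=; first by rewrite fs_ocat.
exact: leq_trans (le_B _ _ le_y0) le_B'.
Qed.

Lemma erase_bound_onat n : erase_bound (onat n) (addn^~ n).
Proof.
elim: n => [|n IH].
  by apply: erase_bound_le erase_bound0 _ => y; rewrite addn0.
have erase1 : erase_bound (onat 1) succn.
  apply: (@erase_bound_omega_pow ozero _ (fun _ => id)) => // y.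
  exact: erase_bound0.
by apply: erase_bound_le (erase_bound_ocat erase1 IH) _ => y /=; lia.
Qed.

Lemma erase_bound_omega : erase_bound oomega double.
Proof.
apply: (@erase_bound_omega_pow (onat 1) _ (fun y w => w + y)) => [y|y0 y le_y0].
  by rewrite /= omega_times_ozero; apply: erase_bound_onat.
lia.
Qed.

Lemma erase_bound_omega_times n :
  erase_bound (omega_times (onat 1) n) (muln (2 ^ n)).
Proof.
elim: n => [|n IH].
  by apply: erase_bound_le erase_bound0 _ => y; rewrite mul1n.
apply: erase_bound_le (erase_bound_ocat erase_bound_omega IH) _ => y /=.
by rewrite expnS -mul2n; lia.
Qed.

Definition oomega2 : ord := ocons (onat 2) ozero.

Lemma erase_bound_omega2 : erase_bound oomega2 (expn 2).
Proof.
apply: (@erase_bound_omega_pow (onat 2) _ (fun y w => 2 ^ y * w))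
  => [y|y0 y le_y0]; first exact: erase_bound_omega_times.
have := leq_pexp2l (isT : 0 < 2) le_y0; have := leq_pmulr (2 ^ y) (ltn0Sn y).
lia.
Qed.

Lemma erase_bound_omega2_times n :
  erase_bound (omega_times (onat 2) n) (iter n (expn 2)).
Proof.
elim: n => [|n IH]; first exact: erase_bound0.
exact: erase_bound_le (erase_bound_ocat erase_bound_omega2 IH) _.
Qed.

Definition add3 (e : ord) : ord := oadd (onat 3) e.

Definition below_omega (e : ord) : bool :=
  if e is ocons c _ then c == ozero else true.

Lemma add3_below_omega e : below_omega e -> add3 e = ocat (onat 3) e.
Proof. by case: e => //= c r /eqP ->. Qed.

Lemma add3_above_omega e : ~~ below_omega e -> add3 e = e.
Proof. by case: e => //= [[|p q]] r. Qed.

Lemma ocmp_add3 x y : ocmp (add3 x) (add3 y) = ocmp x y.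
Proof.
have [x_low|x_high] := boolP (below_omega x);
  have [y_low|y_high] := boolP (below_omega y).
- by rewrite !add3_below_omega // ocmp_ocat2l.
- rewrite add3_below_omega // add3_above_omega //.
  by case: x x_low => [|[|??] ?] //; case: y y_high => [|[|??] ?].
- rewrite add3_above_omega // add3_below_omega //.
  by case: x x_high => [|[|??] ?] //; case: y y_low => [|[|??] ?].
- by rewrite !add3_above_omega.
Qed.

Lemma add3_neq0 e : add3 e <> ozero.
Proof.
have [e_low|e_high] := boolP (below_omega e); first by rewrite add3_below_omega.
by rewrite add3_above_omega //; case: e e_high.
Qed.

Fixpoint add3_exps (x : ord) : ord :=
  if x is ocons a b then ocons (add3 a) (add3_exps b) else ozero.

Fixpoint all_exps (P : pred ord) (x : ord) : bool :=
  if x is ocons a b then P a && all_exps P b else true.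

Lemma omul_omega3 g : is_nf g -> omul oomega3 g = add3_exps g.
Proof.
elim: g => // a _ b IH /andP[/andP[_ nf_b] le_ab].
change (oadd (omul_w oomega3 a) (omul oomega3 b) =
  ocons (add3 a) (add3_exps b)).
rewrite IH //.
have -> : omul_w oomega3 a = ocons (add3 a) ozero by case: a {le_ab}.
case: b {IH nf_b} le_ab => //= b1 b2 le_ab.
by rewrite /olt ocmp_add3 -/(olt a b1) (negbTE le_ab).
Qed.

Lemma oadd_ocat x c r :
  all_exps (fun a => ~~ olt a c) x -> oadd x (ocons c r) = ocat x (ocons c r).
Proof. by elim: x => //= a _ b IH /andP[/negbTE -> /IH ->]. Qed.

Lemma oadd_onat x n : oadd x (onat n) = ocat x (onat n).
Proof.
case: n => [|n]; first by rewrite ocatx0; case: x.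
by rewrite oadd_ocat //; elim: x => //= a _ b ->; case: a.
Qed.

Lemma all_exps_add3 g : all_exps (fun a => ~~ olt a (onat 3)) (add3_exps g).
Proof.
elim: g => //= a _ b ->; rewrite andbT.
by change (~~ olt (add3 a) (add3 ozero)); rewrite /olt ocmp_add3; case: a.
Qed.

Lemma PhiE l g : is_nf g ->
  Phi l g = ocat (ocat (add3_exps g) oomega3) (onat (l + 2)).
Proof.
move=> nf_g; rewrite /Phi omul_omega3 // !oadd_onat ocatA ocat_onat.
by rewrite oadd_ocat ?all_exps_add3.
Qed.

Lemma Phi_neq0 l g : is_nf g -> Phi l g <> ozero.
Proof. by move=> nf_g; rewrite PhiE //; apply: ocat_neq0r; rewrite addn2. Qed.

Lemma nf_ocat x c r : is_nf x -> is_nf (ocons c r) ->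
  all_exps (fun a => ~~ olt a c) x -> is_nf (ocat x (ocons c r)).
Proof.
elim: x => //= a _ b IH /andP[/andP[-> nf_b] le_ab] nf_cr /andP[le_ac /IH-> //].
by case: b {IH nf_b} le_ab.
Qed.

Lemma nf_onat n : is_nf (onat n).
Proof. by elim: n => //= n ->; case: n. Qed.

Lemma nf_add3 e : is_nf e -> is_nf (add3 e).
Proof.
have [e_low|e_high] := boolP (below_omega e); last by rewrite add3_above_omega.
rewrite add3_below_omega //; case: e e_low => [|c r] //= /eqP -> nf_r.
exact: (@nf_ocat (onat 3) ozero r).
Qed.

Lemma nf_add3_exps g : is_nf g -> is_nf (add3_exps g).
Proof.
elim: g => //= a _ b IH /andP[/andP[/nf_add3-> /IH->]].
by case: b {IH} => //= b1 b2; rewrite /olt ocmp_add3.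
Qed.

Lemma nf_Phi l g : is_nf g -> is_nf (Phi l g).
Proof.
move=> nf_g; rewrite PhiE // ocatA addn2.
by apply: nf_ocat; rewrite ?nf_add3_exps ?all_exps_add3 //= nf_onat; case: l.
Qed.

Lemma lead_count_ocat a r e : lead_count a (ocat r e) <= lead_count a r + MC e.
Proof.
elim: r => /= [|c _ d IH]; first exact: lead_count_leMC.
by case: ifP => _ //; rewrite addSn ltnS.
Qed.

Lemma MC_ocat b e : MC (ocat b e) <= MC b + MC e.
Proof. by elim: b => //= a _ r IH; have := lead_count_ocat a r e; lia. Qed.

Lemma MC_onat n : MC (onat n) = n.
Proof.
elim: n => //= n ->.
suff -> : lead_count ozero (onat n) = n by lia.
by elim: n => //= n ->.
Qed.

Lemma MC_add3 e : MC (add3 e) <= MC e + 3.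
Proof.
have [e_low|e_high] := boolP (below_omega e).
  rewrite add3_below_omega //.
  by have := MC_ocat (onat 3) e; rewrite MC_onat; lia.
by rewrite add3_above_omega //; lia.
Qed.

Lemma lead_count_add3_exps a b :
  lead_count (add3 a) (add3_exps b) = lead_count a b.
Proof. by elim: b => //= c _ d ->; rewrite /oeq ocmp_add3. Qed.

Lemma MC_add3_exps g : MC (add3_exps g) <= MC g + 3.
Proof.
elim: g => //= a _ b IH; rewrite lead_count_add3_exps.
by have := MC_add3 a; lia.
Qed.

Lemma MC_Phi l g : is_nf g -> MC (Phi l g) <= MC g + l + 8.
Proof.
move=> nf_g; rewrite PhiE // ocatA.
have := MC_ocat (add3_exps g) (ocat oomega3 (onat (l + 2))).
have MC_tail : MC (ocat oomega3 (onat (l + 2))) <= l + 5.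
  by apply: leq_trans (MC_ocat _ _) _; rewrite MC_onat /=; lia.
by have := MC_add3_exps g; lia.
Qed.

Lemma olt_Phi_ocat_omega2 l g' g : olt g' g ->
  olt (ocat (add3_exps g') (ocat oomega3 (onat (l + 2))))
      (ocat (add3_exps g) oomega2).
Proof.
elim: g' g => [|a' _ b' IH] [|a b] //; last first.
  rewrite /olt /= ocmp_add3; case E: (ocmp a' a) => // lt_b.
  exact: IH lt_b.
move=> _; change (olt (ocons (add3 ozero) (onat (l + 2)))
  (ocons (add3 a) (ocat (add3_exps b) oomega2))).
case: a => [|a1 a2]; last by apply: olt_ocons_exp; rewrite /olt ocmp_add3.
rewrite /olt /= addn2.
by case: b => [|b1 b2] //=; have := @add3_neq0 b1; case: (add3 b1).
Qed.

Lemma foldl_fs_ocat_onat P n Y : P <> ozero ->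
  foldl fs (ocat P (onat n)) Y = ozero ->
  n < size Y /\ foldl fs (ocat P (onat n)) (take n Y) = P.
Proof.
move=> P_neq0; elim: n Y => [|n IH] [|y Y] /=; rewrite ?ocatx0 //.
- by move=> P0; have := @ocat_neq0l _ (onat n.+1) P_neq0 P0.
- by rewrite fs_ocat_onatS => /IH[].
Qed.

Lemma add8_lt_exp2 n : 4 <= n -> n + 8 < 2 ^ n.
Proof.
elim: n => [//|n IH] le4n.
case: (ltnP n 4) => [lt_n4|/IH]; first by have -> : n = 3 by lia.
by rewrite expnS; lia.
Qed.

Lemma leq_Etow a b : a <= b -> Etow a <= Etow b.
Proof. by move=> le_ab; rewrite /Etow !leq_pexp2l. Qed.

Lemma iter_exp2_ge k x : x <= iter k (expn 2) x.
Proof. by elim: k => //= k IH; apply: leq_trans IH (ltnW (ltn_expl _ _)). Qed.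

Lemma Etow_lt_tower L k z : 4 <= z -> L < z -> k + 4 <= z ->
  Etow L + k + 8 < iter z.-1 (expn 2) z.+1.
Proof.
move=> le4z lt_Lz le_kz.
set E := Etow z.-1.
have tower_ge : Etow z.+1 <= iter z.-1 (expn 2) z.+1.
  by rewrite -(subnK (_ : 3 <= z.-1)) ?iterD; [exact: iter_exp2_ge | lia].
have le_EL : Etow L <= E by apply: leq_Etow; lia.
have le_zE : 2 ^ z <= E.
  rewrite /E /Etow leq_pexp2l //.
  have := ltn_expl z.-1 (isT : 1 < 2).
  by have := ltn_expl (2 ^ z.-1) (isT : 1 < 2); lia.
have le_2E : 2 * E <= Etow z.+1.
  rewrite /E /Etow -expnS leq_pexp2l // ltn_exp2l //.
  by rewrite ltn_exp2l //; lia.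
by have := add8_lt_exp2 le4z; lia.
Qed.

Lemma Phi_reaches_omega2 l g Y : is_nf g -> sorted ltn Y ->
  foldl fs (Phi l g) Y = ozero ->
  exists m, [/\ l.+2 < m < size Y,
    foldl fs (Phi l g) (take m Y) = ocat (add3_exps g) oomega2
    & all (leq (iter (nth 0 Y l.+2).-1 (expn 2) (nth 0 Y l.+2).+1)) (drop m Y)].
Proof.
move=> nf_g sY; set M := add3_exps g.
have M3_neq0 : ocat M oomega3 <> ozero by apply: ocat_neq0r.
have M2_neq0 : ocat M oomega2 <> ozero by apply: ocat_neq0r.
rewrite PhiE // addn2 -/M => Y0.
have [lt_lY E1] := foldl_fs_ocat_onat M3_neq0 Y0.
rewrite (foldl_take_drop _ _ _ l.+2) E1 (drop_nth 0) //= in Y0.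
set z := nth 0 Y l.+2 in Y0 *.
have z_gt0 : 0 < z.
  by have := @sorted_ltn_nth_gap Y 0 l.+2 sY lt_lY; rewrite add0n -/z; lia.
have Ez :
    fs (ocat M oomega3) z = ocat (ocat M oomega2) (omega_times (onat 2) z.-1).
  by rewrite fs_ocat // ocatA -(prednK z_gt0).
rewrite Ez in Y0.
have sY3 : sorted ltn (drop l.+3 Y) by apply: drop_sorted.
have lt_zY3 : z.+1 <= nth 0 (drop l.+3 Y) 0.
  have Y3_gt0 := foldl_fs_size_gt0 Y0 (ocat_neq0l M2_neq0).
  rewrite size_drop in Y3_gt0; rewrite nth_drop addn0.
  by apply: (sorted_ltn_nth ltn_trans) => //; rewrite inE; lia.
have [m3 [lt_m3 E3 tower_le]] :=
  @erase_bound_omega2_times z.-1 _ _ z.+1 M2_neq0 sY3 lt_zY3 Y0.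
exists (l.+3 + m3); split.
- by rewrite size_drop in lt_m3; lia.
- rewrite addSnnS; apply: (foldl_take_addn E1).
  by rewrite (drop_nth 0) //= Ez.
- rewrite addnC -drop_drop.
  apply: sub_all (sorted_ltn_head_le (drop_sorted m3 sY3)) => y.
  by rewrite nth_drop addn0; apply: leq_trans.
Qed.

Lemma Phi_step l g g' Y : is_nf g -> is_nf g' -> olt g' g ->
  sorted ltn Y -> all (fun x => 2 < x) Y -> foldl fs (Phi l g) Y = ozero ->
  (1 < size Y -> MC g' <= Etow (nth 0 Y 1 + l)) ->
  exists m, 0 < m < size Y /\ foldl fs (Phi l g) (take m Y) = Phi l g'.
Proof.
move=> nf_g nf_g' lt_g'g sY Y_gt2 Y0 MC_g'.
have [m [/andP[lt_lm lt_mY] Em tower_le]] := Phi_reaches_omega2 nf_g sY Y0.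
have Ym0 : foldl fs (ocat (add3_exps g) oomega2) (drop m Y) = ozero.
  by rewrite -Em -foldl_take_drop.
have lt_lY : l.+2 < size Y := ltn_trans lt_lm lt_mY.
have gap : nth 0 Y 1 + l.+1 <= nth 0 Y l.+2 :=
  @sorted_ltn_nth_gap Y 1 l.+1 sY lt_lY.
have lt_1Y : 1 < size Y by apply: leq_trans lt_lY.
have Y1_gt2 : 2 < nth 0 Y 1 by apply: (allP Y_gt2); apply: mem_nth.
have MC_lt : all (fun y => MC (Phi l g') < y) (drop m Y).
  apply: sub_all tower_le => y; apply: leq_trans.
  have := Etow_lt_tower (L := nth 0 Y 1 + l) (k := l) (z := nth 0 Y l.+2).
  by have := MC_Phi l nf_g'; have := MC_g' lt_1Y; lia.
have le_Phi : ole (Phi l g') (ocat (add3_exps g) oomega2).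
  by rewrite /ole PhiE // ocatA olt_Phi_ocat_omega2 ?orbT.
have [m' lt_m' Em'] :=
  foldl_fs_hits (nf_Phi l nf_g') (Phi_neq0 nf_g') le_Phi MC_lt Ym0.
exists (m + m'); split; last exact: foldl_take_addn Em Em'.
by rewrite size_drop in lt_m'; lia.
Qed.

Lemma Phi_step_within l X a m i g g' :
  sorted ltn X -> all (fun x => 2 < x) X -> foldl fs a X = ozero ->
  foldl fs a (take m X) = Phi l g -> i <= m ->
  is_nf g -> is_nf g' -> olt g' g ->
  (i.+1 < size X -> MC g' <= Etow (nth 0 X i.+1 + l)) ->
  exists2 m', i < m' & foldl fs a (take m' X) = Phi l g'.
Proof.
move=> sX X_gt2 X0 Em le_im nf_g nf_g' lt_g'g MC_g'.
have Xm0 : foldl fs (Phi l g) (drop m X) = ozero.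
  by rewrite -Em -foldl_take_drop.
have MC_next : 1 < size (drop m X) -> MC g' <= Etow (nth 0 (drop m X) 1 + l).
  rewrite size_drop nth_drop => lt_1X.
  have lt_iX : i.+1 < size X by lia.
  apply: leq_trans (MC_g' lt_iX) (leq_Etow _); rewrite leq_add2r.
  by apply: sorted_ltn_nth_mono sX _ _; lia.
have X_gt2' : all (fun x => 2 < x) (drop m X).
  by apply/allP => x /mem_drop /(allP X_gt2).
have [m' [/andP[m'_gt0 _] Em']] :=
  Phi_step nf_g nf_g' lt_g'g (drop_sorted m sX) X_gt2' Xm0 MC_next.
by exists (m + m'); [lia | apply: foldl_take_addn Em Em'].
Qed.

Theorem lemma3p1 (l : nat) (X : seq nat) (gamma : nat -> ord) (j : nat) :
  sorted ltn X ->
  all (fun x => 2 < x) X ->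
  large (Phi l (gamma 0)) X ->
  (forall i, i <= j -> is_nf (gamma i)) ->
  (forall i, i < j -> olt (gamma i.+1) (gamma i)) ->
  (forall i, i <= j -> i < size X -> MC (gamma i) <= Etow (nth 0 X i + l)) ->
  j < size X.
Proof.
move=> sX X_gt2 /eqP X0 nf_gamma lt_gamma MC_gamma.
have reach i : i <= j ->
    exists2 m, i <= m & foldl fs (Phi l (gamma 0)) (take m X) = Phi l (gamma i).
  elim: i => [|i IH] lt_ij; first by exists 0; rewrite ?take0.
  have [m le_im Em] := IH (ltnW lt_ij).
  apply: Phi_step_within sX X_gt2 X0 Em le_im _ _ (lt_gamma _ lt_ij) _.
  - exact: nf_gamma (ltnW lt_ij).
  - exact: nf_gamma lt_ij.
  - exact: MC_gamma lt_ij.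
have [m le_jm Em] := reach j (leqnn j).
rewrite ltnNge; apply/negP => le_Xj.
apply: (@Phi_neq0 l _ (nf_gamma j (leqnn j))).
by rewrite -Em take_oversize ?X0 //; lia.
Qed.
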